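(* In the setting below, for each $1\le t\le mn$, $$\left|\mathbb{E}\left(w_t\left(z_t-\frac1n\right)\right)\right|\le \frac{4}{mn}\sqrt{6\sum_{i=1}^{mn}\mathbb{E}(z_i)+8m}.$$
   Context: Setting: $m,n$ are positive integers with $n\ge 1200\sqrt m$. A deck of $mn$ cards with $m$ copies of each label $1,\dots,n$ is shuffled uniformly at random. A fixed guessing strategy is used: in round $t=1,\dots,mn$ the Guesser guesses $g_t\in\{1,\dots,n\}$, a function (possibly randomized independently of the deck) of $y_1,\dots,y_{t-1}$, where $y_t\in\{0,1\}$ is the indicator that the $t$-th card has label $g_t$. For a vector $v$, $v_{\le t}:=(v_1,\dots,v_t)$. For $1\le k\le n$, $1\le t\le mn+1$: $a(k,t):=|\{1\le i<t: g_i=k\}|$. Let $Y:=\lfloor \tfrac16\sqrt m\, n\rfloor$. Let $(z_1,\dots,z_{mn})\in\{0,1\}^{mn}$ be a random vector (on an extension of the probability space), with $c(k,t):=|\{1\le i<t: g_i=k,\ z_i=1\}|$, satisfying almost surely: (a) for all $k,t$: $m-\max\{mn-a(k,t)-Y,0\}\le c(k,t)\le m$; (b) for each $t$, conditioned on $g_{\le t},y_{\le t}$, the coordinates of $z_{\le t}$ are mutually independent and independent from $g_{\le mn},y_{\le mn}$; (c) for each $t$, if $a(g_t,t)<mn-Y$ then $\mathbb{E}(z_t\mid g_{\le t},z_{\le t-1})=\frac{m-c(g_t,t)}{mn-a(g_t,t)-Y}$; (d) for each $t$, if $\mathbb{E}(y_t\mid g_{\le t},y_{\le t-1})\le\mathbb{E}(z_t\mid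 g_{\le t},z_{\le t-1})$ then $y_t\le z_t$. (Such a vector exists.) For $1\le t\le mn$, $w_t\in\{0,1\}$ is the indicator of the event $a(g_t,t)\le \frac12 mn$. *)

From HB Require Import structures.
From mathcomp Require Import all_boot all_order all_algebra.
From mathcomp Require Import reals.
Set Implicit Arguments. Unset Strict Implicit. Unset Printing Implicit Defensive.
Import Order.TTheory GRing.Theory Num.Theory.
Local Open Scope ring_scope.

Section FinProb.
Context {R : realType} {Omega : finType} (P : Omega -> R).

Definition is_fprob : Prop := (forall w, 0 <= P w) /\ \sum_w P w = 1.

Definition Pr (A : pred Omega) : R := \sum_(w | A w) P w.

Definition Ex (X : Omega -> R) : R := \sum_w P w * X w.

Definition condEx {T : eqType} (V : Omega -> T) (X : Omega -> R) (w0 : Omega) : R :=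
  (\sum_(w | V w == V w0) P w * X w) / Pr (fun w => V w == V w0).

Definition condPr {T : eqType} (V : Omega -> T) (A : pred Omega) (w0 : Omega) : R :=
  condEx V (fun w => (A w)%:R) w0.
End FinProb.

(* Rounds are indexed 0-based by 'I_(m*n): round t here is round t+1 of the paper.
   Labels are 'I_n (label k here is label k+1 of the paper). *)

Definition valid_deck (m n : nat) (s : {ffun 'I_(m * n) -> 'I_n}) : bool :=
  [forall k : 'I_n, #|[set i : 'I_(m * n) | s i == k]| == m].

Definition rounds_before (N : nat) (t : nat) : seq 'I_N :=
  [seq j <- enum 'I_N | (nat_of_ord j < t)%N].
Definition rounds_upto (N : nat) (t : nat) : seq 'I_N :=
  [seq j <- enum 'I_N | (nat_of_ord j <= t)%N].

Definition acount {Omega : finType} {N n : nat} (g : 'I_N -> Omega -> 'I_n)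
  (k : 'I_n) (t : nat) (w : Omega) : nat :=
  #|[set i : 'I_N | (i < t)%N && (g i w == k)]|.

Definition ccount {Omega : finType} {N n : nat} (g : 'I_N -> Omega -> 'I_n)
  (z : 'I_N -> Omega -> bool) (k : 'I_n) (t : nat) (w : Omega) : nat :=
  #|[set i : 'I_N | [&& (i < t)%N, g i w == k & z i w]]|.

Definition Yval {R : realType} (m n : nat) : R :=
  (Num.floor (Num.sqrt (m%:R : R) * n%:R / 6))%:~R.
Arguments valid_deck : clear implicits.

From HB Require Import structures.
From mathcomp Require Import all_boot all_order all_algebra.
From mathcomp Require Import reals.
From mathcomp Require Import ring lra.
Set Implicit Arguments. Unset Strict Implicit. Unset Printing Implicit Defensive.
Import Order.TTheory GRing.Theory Num.Theory.
Local Open Scope ring_scope.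

(* For a label k let d_k be Y plus the sum of 1 - n z_i over the early rounds
   i < t (those with a(g_i, i) <= mn/2) in which k was guessed.  In an early
   round the conditional mean of z_t given the past is (m - c)/(mn - a - Y), and
   this minus 1/n equals d_{g_t} / (n (mn - a - Y)), with denominator >= mn/3.
   The potential Phi = sum_k dist(d_k, [0, Y])^2 grows in expectation only
   through its second-order terms, because the conditional mean of each
   increment of d_k has the sign opposite to d_k; hence
   E Phi_t <= t + n^2 sum_i E z_i <= n^2 (m + sum_i E z_i).  As
   |d| <= Y + sqrt Phi, E sqrt Phi <= sqrt (E Phi) and Y <= sqrt m n / 6, the
   bias is at most (7/2) sqrt (m + sum_i E z_i) / (mn). *)

Lemma sqrt_le_amgm {R : realType} (x c : R) : 0 <= x -> 0 < c -> Num.sqrt x <= (x / c + c) / 2.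
Proof.
move=> x_ge0 c_gt0; have := sqr_ge0 (Num.sqrt x - c).
rewrite sqrrB sqr_sqrtr // => h.
have -> : (x / c + c) / 2 = (x + c ^+ 2) / (2 * c) by field; rewrite gt_eqF.
rewrite ler_pdivlMr ?mulr_gt0 //; lra.
Qed.

Section Expectation.
Context {R : realType} {Omega : finType} (P : Omega -> R).
Hypothesis P_ge0 : forall w, 0 <= P w.

Lemma ler_Ex (f h : Omega -> R) :
  (forall w, 0 < P w -> f w <= h w) -> Ex P f <= Ex P h.
Proof.
move=> fh; apply: ler_sum => w _.
have [<-|Pw] := eqVneq 0 (P w); first by rewrite !mul0r.
by rewrite ler_pM2l ?fh // lt_def eq_sym Pw P_ge0.
Qed.

Lemma eq_Ex (f h : Omega -> R) :
  (forall w, 0 < P w -> f w = h w) -> Ex P f = Ex P h.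
Proof. by move=> fh; apply/eqP; rewrite eq_le !ler_Ex // => w /fh ->. Qed.

Lemma ExD (f h : Omega -> R) : Ex P (fun w => f w + h w) = Ex P f + Ex P h.
Proof. by rewrite /Ex -big_split; apply: eq_bigr => w _; rewrite mulrDr. Qed.

Lemma ExZ c (f : Omega -> R) : Ex P (fun w => c * f w) = c * Ex P f.
Proof. by rewrite /Ex mulr_sumr; apply: eq_bigr => w _; rewrite mulrCA. Qed.

Lemma ExB (f h : Omega -> R) : Ex P (fun w => f w - h w) = Ex P f - Ex P h.
Proof. by rewrite /Ex -sumrB; apply: eq_bigr => w _; rewrite mulrBr. Qed.

Lemma Ex0 : Ex P (fun _ => 0) = 0.
Proof. by rewrite /Ex big1 // => w _; rewrite mulr0. Qed.

Lemma Ex_ge0 (f : Omega -> R) : (forall w, 0 <= f w) -> 0 <= Ex P f.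
Proof. by move=> f_ge0; apply: sumr_ge0 => w _; rewrite mulr_ge0. Qed.

Lemma normr_Ex_le (f : Omega -> R) : `|Ex P f| <= Ex P (fun w => `|f w|).
Proof.
apply: le_trans (ler_norm_sum _ _ _) _; apply: ler_sum => w _.
by rewrite normrM ger0_norm.
Qed.

Lemma Ex_mul_condEx {T : eqType} (V : Omega -> T) (h X : Omega -> R) :
  (forall w w', V w = V w' -> h w = h w') ->
  Ex P (fun w => h w * X w) = Ex P (fun w => h w * condEx P V X w).
Proof.
move=> hV; rewrite /Ex /condEx /Pr.
pose Q w := \sum_(u | V u == V w) P u.
have Q_gt0 w : 0 < P w -> 0 < Q w.
  move=> Pw; rewrite /Q (bigD1 w) //=; apply: ltr_pwDl => //.
  exact: sumr_ge0.
transitivity (\sum_w \sum_(w' | V w == V w') P w * h w * X w * (P w' / Q w)).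
  apply: eq_bigr => w _; rewrite -mulr_sumr -mulr_suml.
  have [<-|Pw] := eqVneq 0 (P w); first by rewrite !mul0r.
  have Pw_gt0 : 0 < P w by rewrite lt_def eq_sym Pw P_ge0.
  rewrite (eq_bigl (fun u => V u == V w)) => [|u]; last by rewrite eq_sym.
  by rewrite -/(Q w) mulfV ?mulr1 ?mulrA // gt_eqF ?Q_gt0.
rewrite (exchange_big_dep xpredT) //=; apply: eq_bigr => w _.
rewrite -/(Q w) mulr_suml !mulr_sumr; apply: eq_bigr => w' /eqP Vw'w.
by rewrite (hV w' w) // /Q Vw'w; ring.
Qed.

Hypothesis P_sum1 : \sum_w P w = 1.

Lemma Ex_cst c : Ex P (fun _ => c) = c.
Proof. by rewrite /Ex -mulr_suml P_sum1 mul1r. Qed.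

Lemma Ex_sqrt_le (f : Omega -> R) (c : R) :
  (forall w, 0 <= f w) -> 0 < c -> Ex P f <= c ^+ 2 -> Ex P (fun w => Num.sqrt (f w)) <= c.
Proof.
move=> f_ge0 c_gt0 Ef.
apply: le_trans (ler_Ex (fun w _ => sqrt_le_amgm (f_ge0 w) c_gt0)) _.
have -> : Ex P (fun w => (f w / c + c) / 2) = (2 * c)^-1 * Ex P f + c / 2.
  rewrite -ExZ -[c / 2]Ex_cst -ExD.
  by apply: eq_Ex => w _; field; rewrite gt_eqF.
have : (2 * c)^-1 * Ex P f <= (2 * c)^-1 * c ^+ 2.
  by rewrite ler_wpM2l // invr_ge0 mulr_ge0 // ltW.
have -> : (2 * c)^-1 * c ^+ 2 = c / 2 by field; rewrite gt_eqF.
lra.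
Qed.
End Expectation.

Section Barrier.
Context {R : realType} (Y : R).
Hypothesis Y_ge0 : 0 <= Y.

(* [lra] ignores section hypotheses, hence the [have := Y_ge0] below. *)

Definition barrier (x : R) : R :=
  (if Y <= x then x - Y else 0) ^+ 2 + (if x < 0 then x else 0) ^+ 2.

Definition barrier' (x : R) : R :=
  2 * (if Y <= x then x - Y else 0) + 2 * (if x < 0 then x else 0).

Lemma barrier_ge0 x : 0 <= barrier x.
Proof. by rewrite addr_ge0 // sqr_ge0. Qed.

Lemma barrierY : barrier Y = 0.
Proof. by rewrite /barrier lexx subrr ltNge Y_ge0 /= expr0n /= addr0. Qed.

Lemma barrierD_le x d : barrier (x + d) <= barrier x + barrier' x * d + d ^+ 2.
Proof.
have := Y_ge0; rewrite /barrier /barrier'.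
case: (lerP Y (x + d)) => h1; case: (ltrP (x + d) 0) => h2;
case: (lerP Y x) => h3; case: (ltrP x 0) => h4 Y0; first [by exfalso; lra | nra].
Qed.

Lemma barrier'_mul_ge0 x : 0 <= barrier' x * x.
Proof.
have := Y_ge0; rewrite /barrier'.
case: (lerP Y x) => h1; case: (ltrP x 0) => h2 Y0; first [by exfalso; lra | nra].
Qed.

Lemma normr_le_barrier x : `|x| <= Y + Num.sqrt (barrier x).
Proof.
have := Y_ge0; rewrite /barrier; case: (lerP Y x) => h1; case: (ltrP x 0) => h2 Y0;
  rewrite ?expr0n /= ?addr0 ?add0r ?sqrtr_sqr.
- by exfalso; lra.
- by rewrite !ger0_norm; lra.
- by rewrite !ltr0_norm; lra.
- by rewrite sqrtr0 ger0_norm; lra.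
Qed.
End Barrier.

Lemma big_ltnS {R : realType} N (F : 'I_N -> R) (s : 'I_N) :
  \sum_(i : 'I_N | (i < s.+1)%N) F i = \sum_(i : 'I_N | (i < s)%N) F i + F s.
Proof.
rewrite (bigD1 s) //= addrC; congr (_ + _); apply: eq_bigl => i.
rewrite ltnS leq_eqVlt -[nat_of_ord i == _]/(i == s).
by case: (eqVneq i s) => [->|]; rewrite ?ltnn ?andbT ?andbF.
Qed.

Section Drift.
Context {R : realType} (m n : nat) {Omega : finType}
  (g : 'I_(m * n) -> Omega -> 'I_n) (z : 'I_(m * n) -> Omega -> bool) (Y : R).

Definition early (s : 'I_(m * n)) (w : Omega) : bool :=
  ((acount g (g s w) s w).*2 <= m * n)%N.

Lemma earlyE (s : 'I_(m * n)) w :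
  early s w = ((acount g (g s w) s w)%:R <= (m * n)%:R / 2 :> R).
Proof. by rewrite ler_pdivlMr // -natrM muln2 ler_nat. Qed.

Definition increment (s : 'I_(m * n)) (w : Omega) : R :=
  if early s w then 1 - n%:R * (z s w)%:R else 0.

Definition drift (k : 'I_n) (s : nat) (w : Omega) : R :=
  Y + \sum_(i : 'I_(m * n) | (i < s)%N && (g i w == k)) increment i w.

Definition potential (s : nat) (w : Omega) : R := \sum_(k : 'I_n) barrier Y (drift k s w).

Lemma leq_acount k i s w : (i <= s)%N -> (acount g k i w <= acount g k s w)%N.
Proof.
move=> le_is; apply: subset_leq_card; apply/subsetP => j; rewrite !inE.
by case/andP => lt_ji ->; rewrite (leq_trans lt_ji le_is).
Qed.

Lemma drift_early (s : 'I_(m * n)) w : early s w ->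
  drift (g s w) s w = (acount g (g s w) s w)%:R + Y - n%:R * (ccount g z (g s w) s w)%:R.
Proof.
move=> es; rewrite /drift /increment.
have all_early (i : 'I_(m * n)) : (i < s)%N && (g i w == g s w) -> early i w.
  case/andP=> lt_is /eqP gi; apply: leq_trans es; rewrite /early gi leq_double.
  exact/leq_acount/ltnW.
have card_sum (C : pred 'I_(m * n)) : \sum_(i | C i) (1 : R) = #|[set i | C i]|%:R.
  by rewrite sumr_const cardsE.
rewrite (eq_bigr (fun i => 1 - n%:R * (if z i w then 1 else 0))) => [|i /all_early ->];
  last by case: (z i w).
rewrite sumrB -mulr_sumr -big_mkcondr /= !card_sum /acount /ccount.
have -> : [set i : 'I_(m * n) | (i < s)%N && (g i w == g s w) & z i w] =
          [set i : 'I_(m * n) | (i < s)%N & (g i w == g s w) && z i w].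
  by apply/setP => i; rewrite !inE andbA.
ring.
Qed.

Lemma driftS (s : 'I_(m * n)) k w :
  drift k s.+1 w = drift k s w + (g s w == k)%:R * increment s w.
Proof.
rewrite /drift -addrA !big_mkcondr big_ltnS /=.
by case: (g s w == k); rewrite ?mul1r ?mul0r ?addr0.
Qed.

Lemma potentialS_le (s : 'I_(m * n)) w : 0 <= Y ->
  potential s.+1 w <=
  potential s w + barrier' Y (drift (g s w) s w) * increment s w + increment s w ^+ 2.
Proof.
move=> Y_ge0; rewrite /potential.
under eq_bigr do rewrite driftS.
apply: le_trans (ler_sum _ (fun k _ => barrierD_le Y_ge0 _ _)) _.
rewrite 2!big_split /= -!addrA lerD2l.
rewrite (bigD1 (g s w)) //= [X in _ + X <= _](bigD1 (g s w)) //= eqxx mul1r.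
rewrite [_ ^+ 2 + _]addrC -addrA !big1 ?addr0 ?add0r // => k /negbTE.
  by rewrite eq_sym => ->; rewrite mul0r expr0n.
by rewrite eq_sym => ->; rewrite mul0r mulr0.
Qed.

Lemma potential0 w : 0 <= Y -> potential 0 w = 0.
Proof.
move=> Y_ge0; rewrite /potential big1 // => k _.
by rewrite /drift big_pred0 ?addr0 ?barrierY.
Qed.

Lemma increment_sqr_le (s : 'I_(m * n)) w : increment s w ^+ 2 <= 1 + n%:R ^+ 2 * (z s w)%:R.
Proof.
have n_ge0 : (0 : R) <= n%:R by [].
by rewrite /increment; case: (early s w); case: (z s w) => /=; nra.
Qed.

Lemma eq_acount k s w w' : (forall i : 'I_(m * n), (i < s)%N -> g i w = g i w') ->
  acount g k s w = acount g k s w'.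
Proof.
move=> gww'; apply: eq_card => i; rewrite !inE.
by case: (boolP (i < s)%N) => //= /gww' ->.
Qed.

Lemma eq_early (s : 'I_(m * n)) w w' :
  (forall i : 'I_(m * n), (i <= s)%N -> g i w = g i w') -> early s w = early s w'.
Proof.
move=> gww'; rewrite /early gww' //; congr (_.*2 <= _)%N.
by apply: eq_acount => i lt_is; apply/gww'/ltnW.
Qed.

Lemma eq_drift k s w w' :
  (forall i : 'I_(m * n), (i < s)%N -> g i w = g i w' /\ z i w = z i w') ->
  drift k s w = drift k s w'.
Proof.
move=> gzww'; rewrite /drift /increment; congr (_ + _).
rewrite big_mkcond [RHS]big_mkcond; apply: eq_bigr => i _.
case: (boolP (i < s)%N) => //= lt_is; have [-> ->] := gzww' i lt_is.
suff -> : early i w = early i w' by [].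
by apply: eq_early => j le_ji; exact: (gzww' j (leq_ltn_trans le_ji lt_is)).1.
Qed.
End Drift.

Section Martingale.
Context {R : realType} (m n : nat) {Omega : finType} (P : Omega -> R)
  (g : 'I_(m * n) -> Omega -> 'I_n) (z : 'I_(m * n) -> Omega -> bool) (Y : R).
Hypothesis P_ge0 : forall w, 0 <= P w.
Hypothesis P_sum1 : \sum_w P w = 1.
Hypothesis Y_ge0 : 0 <= Y.
Hypothesis Y_le : Y <= (m * n)%:R / 6.
Hypothesis mn_gt0 : (0 < m * n)%N.

Definition past (s : 'I_(m * n)) (w : Omega) :=
  ([seq g i w | i <- rounds_upto (m * n) s], [seq z i w | i <- rounds_before (m * n) s]).

Definition zmean (s : 'I_(m * n)) (w : Omega) : R :=
  (m%:R - (ccount g z (g s w) s w)%:R) / ((m * n)%:R - (acount g (g s w) s w)%:R - Y).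

Hypothesis zmean_condEx : forall (s : 'I_(m * n)) (w : Omega), 0 < P w ->
  (acount g (g s w) s w)%:R < (m * n)%:R - Y ->
  condEx P (past s) (fun w' => (z s w')%:R) w = zmean s w.

Lemma early_past (s : 'I_(m * n)) w w' : past s w = past s w' ->
  early g s w = early g s w' /\ drift g z Y (g s w) s w = drift g z Y (g s w') s w'.
Proof.
case=> /eq_in_map g_eq /eq_in_map z_eq.
have gww' (i : 'I_(m * n)) : (i <= s)%N -> g i w = g i w'.
  by move=> le_is; apply: g_eq; rewrite mem_filter le_is mem_enum.
have zww' (i : 'I_(m * n)) : (i < s)%N -> z i w = z i w'.
  by move=> lt_is; apply: z_eq; rewrite mem_filter lt_is mem_enum.
split; first exact: eq_early.
rewrite gww' //; apply: eq_drift => i lt_is.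
by split; [apply/gww'/ltnW | apply: zww'].
Qed.

Lemma early_den_ge (s : 'I_(m * n)) w : early g s w ->
  (m * n)%:R / 3 <= (m * n)%:R - (acount g (g s w) s w)%:R - Y.
Proof. by rewrite (earlyE (R := R)) => es; have := Y_le; lra. Qed.

Lemma Ex_mul_z (s : 'I_(m * n)) (h : Omega -> R) :
  (forall w w', past s w = past s w' -> h w = h w') ->
  (forall w, h w != 0 -> early g s w) ->
  Ex P (fun w => h w * (z s w)%:R) = Ex P (fun w => h w * zmean s w).
Proof.
move=> h_past h_early; rewrite (Ex_mul_condEx P_ge0 _ h_past); apply: eq_Ex => // w Pw.
have [->|/h_early es] := eqVneq (h w) 0; first by rewrite !mul0r.
rewrite zmean_condEx //; have := early_den_ge es.
have : (0 : R) < (m * n)%:R by rewrite ltr0n.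
lra.
Qed.

Lemma Ex_barrier'_increment_le0 (s : 'I_(m * n)) :
  Ex P (fun w => barrier' Y (drift g z Y (g s w) s w) * increment g z s w) <= 0.
Proof.
pose h w := (early g s w)%:R * barrier' Y (drift g z Y (g s w) s w).
have -> : Ex P (fun w => barrier' Y (drift g z Y (g s w) s w) * increment g z s w) =
    Ex P (fun w => h w - n%:R * (h w * (z s w)%:R)).
  by apply: eq_Ex => // w _; rewrite /h /increment; case: (early g s w) => /=; ring.
rewrite ExB ExZ (Ex_mul_z (h := h)); first last.
- by move=> w; rewrite /h; case: (early g s w); rewrite ?mul0r ?eqxx.
- by move=> w w' /early_past [e1 e2]; rewrite /h e1 e2.
rewrite -ExZ -ExB -(Ex0 P); apply: ler_Ex => // w _.
rewrite /h; case: (boolP (early g s w)) => es /=; last by rewrite !mul0r mulr0 subrr.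
have den_ge := early_den_ge es.
have mn_pos : (0 : R) < (m * n)%:R by rewrite ltr0n.
rewrite mul1r drift_early // /zmean.
set a := (acount g _ _ _)%:R in den_ge *; set c := (ccount g z _ _ _)%:R.
set X := a + Y - n%:R * c; set den := (m * n)%:R - a - Y in den_ge *.
have den_gt0 : 0 < den by lra.
(* 1 - n zmean = - drift / den: the drift is pulled back towards 0 on average. *)
have -> : barrier' Y X - n%:R * (barrier' Y X * ((m%:R - c) / den)) =
    - (barrier' Y X * X) / den.
  by rewrite /X /den natrM; field; rewrite -natrM gt_eqF.
by rewrite mulNr oppr_le0; apply: divr_ge0; [apply: barrier'_mul_ge0 | apply: ltW].
Qed.

Lemma Ex_potential_le (s : nat) : (s <= m * n)%N ->
  Ex P (potential g z Y s) <=
  s%:R + n%:R ^+ 2 * \sum_(i : 'I_(m * n) | (i < s)%N) Ex P (fun w => (z i w)%:R).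
Proof.
elim: s => [_|s IH lt_s].
  by rewrite (eq_Ex P_ge0 (fun w _ => potential0 g z w Y_ge0)) Ex0 big_pred0 // mulr0 addr0.
pose s' := Ordinal lt_s.
apply: le_trans (ler_Ex P_ge0 (fun w _ => potentialS_le g z s' w Y_ge0)) _.
rewrite !ExD (big_ltnS (fun i => Ex P (fun w => (z i w)%:R)) s') -[s.+1]addn1 natrD.
have := IH (ltnW lt_s); have := Ex_barrier'_increment_le0 s'.
have : Ex P (fun w => increment g z s' w ^+ 2) <= 1 + n%:R ^+ 2 * Ex P (fun w => (z s' w)%:R).
  apply: le_trans (ler_Ex P_ge0 (fun w _ => increment_sqr_le g z s' w)) _.
  by rewrite ExD ExZ Ex_cst.
lra.
Qed.

Lemma normr_zmean_sub_le (s : 'I_(m * n)) w : early g s w ->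
  `|zmean s w - n%:R^-1| <= 3 / (n%:R * (m * n)%:R) * (Y + Num.sqrt (potential g z Y s w)).
Proof.
move=> es; have := early_den_ge es.
have [m_gt0 n_gt0] : (0 < m)%N /\ (0 < n)%N by apply/andP; rewrite -muln_gt0.
have m_pos : (0 : R) < m%:R by rewrite ltr0n.
have n_pos : (0 : R) < n%:R by rewrite ltr0n.
have mn_pos : (0 : R) < (m * n)%:R by rewrite ltr0n.
have : `|drift g z Y (g s w) s w| <= Y + Num.sqrt (potential g z Y s w).
  apply: le_trans (normr_le_barrier Y_ge0 _) _; rewrite lerD2l ler_wsqrtr //.
  rewrite /potential (bigD1 (g s w)) //= lerDl.
  by apply: sumr_ge0 => k _; apply: barrier_ge0.
rewrite drift_early // /zmean.
set a := (acount g _ _ _)%:R; set c := (ccount g z _ _ _)%:R.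
set K := Y + _; set den := (m * n)%:R - a - Y => X_le den_ge.
have den_gt0 : 0 < den by lra.
have -> : (m%:R - c) / den - n%:R^-1 = (a + Y - n%:R * c) / (n%:R * den).
  by rewrite /den natrM; field; rewrite -natrM !gt_eqF.
have nden_gt0 : 0 < n%:R * den by apply: mulr_gt0.
rewrite normrM normfV (gtr0_norm nden_gt0) ler_pdivrMr //.
have -> : 3 / (n%:R * (m * n)%:R) * K * (n%:R * den) = K * (3 * den / (m * n)%:R).
  by field; rewrite (gt_eqF n_pos) (gt_eqF m_pos).
have : 1 <= 3 * den / (m * n)%:R by rewrite ler_pdivlMr //; lra.
have : 0 <= K by apply: le_trans X_le.
nra.
Qed.

Lemma Ex_sqrt_potential_le (t : 'I_(m * n)) :
  Ex P (fun w => Num.sqrt (potential g z Y t w)) <=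
  n%:R * Num.sqrt (m%:R + \sum_(i : 'I_(m * n)) Ex P (fun w => (z i w)%:R)).
Proof.
set S := \sum_(i : 'I_(m * n)) _.
have [m_gt0 n_gt0] : (0 < m)%N /\ (0 < n)%N by apply/andP; rewrite -muln_gt0.
have m_pos : (0 : R) < m%:R by rewrite ltr0n.
have n_pos : (0 : R) < n%:R by rewrite ltr0n.
have Ez_ge0 (i : 'I_(m * n)) : 0 <= Ex P (fun w => (z i w)%:R) by apply: Ex_ge0.
have S_ge0 : 0 <= S by apply: sumr_ge0.
apply: Ex_sqrt_le => //.
- by move=> w; apply: sumr_ge0 => k _; apply: barrier_ge0.
- by rewrite mulr_gt0 // sqrtr_gt0; lra.
rewrite exprMn sqr_sqrtr; last lra.
apply: le_trans (Ex_potential_le (ltnW (ltn_ord t))) _.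
have : n%:R ^+ 2 * \sum_(i : 'I_(m * n) | (i < t)%N) Ex P (fun w => (z i w)%:R) <= n%:R ^+ 2 * S.
  rewrite ler_wpM2l ?sqr_ge0 //.
  by rewrite [leRHS](bigID (fun i : 'I_(m * n) => (i < t)%N)) /= lerDl sumr_ge0.
have : (t%:R : R) <= n%:R ^+ 2 * m%:R.
  rewrite -natrX -natrM ler_nat (leq_trans (ltnW (ltn_ord t))) //.
  by rewrite [(n ^ 2 * m)%N]mulnC leq_mul2l expnS expn1 leq_pmull ?orbT.
lra.
Qed.

Lemma normr_Ex_early_bias_le (t : 'I_(m * n)) :
  `|Ex P (fun w => (early g t w)%:R * ((z t w)%:R - n%:R^-1))| <=
  3 / (n%:R * (m * n)%:R) *
  (Y + n%:R * Num.sqrt (m%:R + \sum_(i : 'I_(m * n)) Ex P (fun w => (z i w)%:R))).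
Proof.
pose e w : R := (early g t w)%:R.
have -> : Ex P (fun w => e w * ((z t w)%:R - n%:R^-1)) =
    Ex P (fun w => e w * (zmean t w - n%:R^-1)).
  rewrite !(eq_Ex P_ge0 (fun w _ => mulrBr (e w) _ n%:R^-1)) !ExB (Ex_mul_z (h := e)) //.
    by move=> w w' /early_past [ew _]; rewrite /e ew.
  by move=> w; rewrite /e; case: (early g t w); rewrite ?eqxx.
apply: le_trans (normr_Ex_le P_ge0 _) _.
apply: (@le_trans _ _
  (Ex P (fun w => 3 / (n%:R * (m * n)%:R) * (Y + Num.sqrt (potential g z Y t w))))).
  apply: ler_Ex => // w _; rewrite /e; case: (boolP (early g t w)) => es.
    by rewrite mul1r normr_zmean_sub_le.
  rewrite mul0r normr0 mulr_ge0 ?divr_ge0 ?mulr_ge0 ?addr_ge0 ?sqrtr_ge0 //.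
rewrite ExZ ExD Ex_cst // ler_wpM2l ?divr_ge0 ?mulr_ge0 // lerD2l.
exact: Ex_sqrt_potential_le.
Qed.
End Martingale.

Theorem lemma2p4 (R : realType) (m n : nat)
  (m_pos : (0 < m)%N) (n_pos : (0 < n)%N)
  (hmn : 1200 * Num.sqrt (m%:R : R) <= n%:R)
  (Omega : finType) (P : Omega -> R) (hP : is_fprob P)
  (deck : Omega -> {ffun 'I_(m * n) -> 'I_n})
  (U : finType) (rho : Omega -> U)
  (G : 'I_(m * n) -> U -> seq bool -> 'I_n)
  (g : 'I_(m * n) -> Omega -> 'I_n) (y : 'I_(m * n) -> Omega -> bool)
  (z : 'I_(m * n) -> Omega -> bool)
  (h_unif : forall s, Pr P (fun w => deck w == s) =
      (valid_deck m n s)%:R / #|[set s' | valid_deck m n s']|%:R)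
  (h_indep : forall s u, Pr P (fun w => (deck w == s) && (rho w == u)) =
      Pr P (fun w => deck w == s) * Pr P (fun w => rho w == u))
  (h_g : forall t w, g t w = G t (rho w) [seq y i w | i <- rounds_before (m * n) t])
  (h_y : forall t w, y t w = (deck w t == g t w))
  (h_a : forall (k : 'I_n) (t : nat), (t <= m * n)%N -> forall w, 0 < P w ->
      m%:R - Num.max ((m * n)%:R - (acount g k t w)%:R - Yval m n) 0
        <= (ccount g z k t w)%:R :> R
      /\ (ccount g z k t w <= m)%N)
  (h_b : forall (t : 'I_(m * n)) (w0 : Omega), 0 < P w0 ->
      forall (bz : 'I_(m * n) -> bool)
             (h : {ffun 'I_(m * n) -> 'I_n} * {ffun 'I_(m * n) -> bool}),
      let V := fun w => ([seq g i w | i <- rounds_upto (m * n) t],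
                         [seq y i w | i <- rounds_upto (m * n) t]) in
      condPr P V (fun w => [forall i : 'I_(m * n), (i <= t)%N ==> (z i w == bz i)]
                           && (([ffun i => g i w], [ffun i => y i w]) == h)) w0
      = (\prod_(i : 'I_(m * n) | (i <= t)%N) condPr P V (fun w => z i w == bz i) w0)
        * condPr P V (fun w => ([ffun i => g i w], [ffun i => y i w]) == h) w0)
  (h_c : forall (t : 'I_(m * n)) (w : Omega), 0 < P w ->
      (acount g (g t w) t w)%:R < (m * n)%:R - Yval m n :> R ->
      condEx P (fun w' => ([seq g i w' | i <- rounds_upto (m * n) t],
                           [seq z i w' | i <- rounds_before (m * n) t]))
             (fun w' => (z t w')%:R) w
      = (m%:R - (ccount g z (g t w) t w)%:R)
        / ((m * n)%:R - (acount g (g t w) t w)%:R - Yval m n))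
  (h_d : forall (t : 'I_(m * n)) (w : Omega), 0 < P w ->
      condEx P (fun w' => ([seq g i w' | i <- rounds_upto (m * n) t],
                           [seq y i w' | i <- rounds_before (m * n) t]))
             (fun w' => (y t w')%:R) w
      <= condEx P (fun w' => ([seq g i w' | i <- rounds_upto (m * n) t],
                              [seq z i w' | i <- rounds_before (m * n) t]))
             (fun w' => (z t w')%:R) w ->
      (y t w <= z t w)%N)
  (t : 'I_(m * n)) :
  let wt := fun w => ((acount g (g t w) t w)%:R <= (m * n)%:R / 2 :> R)%:R in
  `| Ex P (fun w => wt w * ((z t w)%:R - n%:R^-1)) |
    <= 4 / (m * n)%:R
       * Num.sqrt (6 * (\sum_(i : 'I_(m * n)) Ex P (fun w => (z i w)%:R)) + 8 * m%:R).
Proof.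
cbv zeta; case: hP => P_ge0 P_sum1.
set Y : R := Yval m n; set S := \sum_(i : 'I_(m * n)) _.
have mn_gt0 : (0 < m * n)%N by rewrite muln_gt0 m_pos.
have [m1 n1] : (1 : R) <= m%:R /\ (1 : R) <= n%:R by rewrite !ler1n.
have S_ge0 : 0 <= S by apply: sumr_ge0 => i _; apply: Ex_ge0.
have sqrt_m_ge0 := sqrtr_ge0 (m%:R : R).
have Y_ge0 : 0 <= Y by rewrite /Y /Yval ler0z floor_ge0 divr_ge0 ?mulr_ge0.
have Y_le_sqrt : Y <= Num.sqrt m%:R * n%:R / 6 by rewrite /Y /Yval floor_le.
have sqrt_m_le : Num.sqrt m%:R <= m%:R :> R.
  by have := sqr_sqrtr (ler0n R m); nra.
have Y_le : Y <= (m * n)%:R / 6 by rewrite natrM; nra.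
rewrite (eq_Ex P_ge0 (h := fun w => (early g t w)%:R * ((z t w)%:R - n%:R^-1))); last first.
  by move=> w _; rewrite (earlyE (R := R)).
apply: le_trans (normr_Ex_early_bias_le P_ge0 P_sum1 Y_ge0 Y_le mn_gt0 h_c t) _.
set q := Num.sqrt (m%:R + S).
have q_ge_sqrt_m : Num.sqrt m%:R <= q by rewrite ler_wsqrtr //; lra.
have q_le : q <= Num.sqrt (6 * S + 8 * m%:R) by rewrite ler_wsqrtr; lra.
have Yn_le : Y / n%:R <= q / 6 by rewrite ler_pdivrMr; nra.
have -> : 3 / (n%:R * (m * n)%:R) * (Y + n%:R * q) = 3 * (Y / n%:R + q) / (m * n)%:R.
  by field; rewrite !pnatr_eq0 -!lt0n m_pos n_pos.
by rewrite [leRHS]mulrAC ler_pM2r ?invr_gt0 ?ltr0n //; lra.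
Qed.
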